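(* For every round $\ell\ge\lceil n/2\rceil$ of Algorithm 2, $$\mathbb{E}\Big[v\big(\{e^{(\ell)}\}\ \big|\ \mathrm{ALG}^{\ge\ell+1}\big)\ \Big|\ L^{\le\ell},\,T^{\ge\ell+1}\Big]\ \ge\ \frac{1}{\ell}\Big(v(M^{(\ell)})-v(T^{\ge\ell+1})\Big),$$ where $\{e^{(\ell)}\}$ is read as $\emptyset$ if there is no tentative edge in round $\ell$.
   Context: Submodular secretary matching setting. Let $G=(L\cup R,E)$ be a bipartite graph with $|L|=n$, and $v\colon 2^E\to\mathbb{R}_{\ge0}$ monotone and submodular; for $S,S'\subseteq E$, $v(S\mid S')=v(S\cup S')-v(S')$. The vertices of $L$ arrive one per round in uniformly random order; on arrival of $u\in L$ its incident edges are revealed; $L^{\le\ell}$ denotes the set of vertices of $L$ arriving in rounds $1,\dots,\ell$. $\mathcal{A}$ is an offline algorithm that for every $L'\subseteq L$ returns a matching $\mathcal{A}(L'\cup R)$ of the subgraph induced by $L'\cup R$ with value at least $\alpha$ times the maximum value of $v$ over matchings of that subgraph ($\alpha\in(0,1]$), depending only on the set $L'$. Algorithm 2: it rejects the vertices arriving in rounds $1,\dots,\lceil n/2\rceil-1$; in each round $\ell\ge\lceil n/2\rceil$ with arriving vertex $u$, it computes $M^{(\ell)}=\mathcal{A}(L^{\le\ell}\cup R)$, lets $e^{(\ell)}$ be the edge incident to $u$ in $M^{(\ell)}$ (the tentative edge; none if $u$ is unmatched), and if $e^{(\ell)}$ exists and the set of accepted edges together with $e^{(\ell)}$ is a matching,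 accepts $e^{(\ell)}$. $T^{\ge\ell}$ is the set of tentative edges of rounds $\ell,\dots,n$, and $\mathrm{ALG}^{\ge\ell}$ is the set of edges accepted in rounds $\ell,\dots,n$. *)

From HB Require Import structures.
From mathcomp Require Import all_boot all_order all_algebra all_fingroup.
Set Implicit Arguments. Unset Strict Implicit. Unset Printing Implicit Defensive.
Import Order.TTheory GRing.Theory Num.Theory.

(* Bipartite graph G = (L u R, E): L is identified with 'I_n (|L| = n),
   R is an arbitrary finite type, and E : {set 'I_n * R} is the edge set. *)

Section Matchings.
Variables (n : nat) (R : finType) (E : {set 'I_n * R}).

Definition is_matching (M : {set 'I_n * R}) : bool :=
  (M \subset E) &&
  [forall e1 in M, forall e2 in M,
     ((e1.1 == e2.1) || (e1.2 == e2.2)) ==> (e1 == e2)].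

Definition is_matching_in (L' : {set 'I_n}) (M : {set 'I_n * R}) : bool :=
  is_matching M && [forall e in M, e.1 \in L'].
End Matchings.

Definition vmarg (F : numDomainType) (X : finType) (v : {set X} -> F)
  (S S' : {set X}) : F := (v (S :|: S') - v S')%R.

Section Algorithm2.
Variables (n : nat) (R : finType) (E : {set 'I_n * R})
          (A : {set 'I_n} -> {set 'I_n * R}).

(* An arrival order is a permutation s of 'I_n : the vertex arriving in round
   i+1 (rounds are numbered 1..n) is s i. *)

Definition Lle (s : {perm 'I_n}) (l : nat) : {set 'I_n} := [set s i | i : 'I_n & i < l].

Definition Mround (s : {perm 'I_n}) (l : nat) : {set 'I_n * R} := A (Lle s l).

(* {e^{(l)}}: the set of edges of M^{(l)} incident to the vertex arriving in
   round l (empty if none / if l is not a round). *)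
Definition tent (s : {perm 'I_n}) (l : nat) : {set 'I_n * R} :=
  [set e in Mround s l | [exists i : 'I_n, (i.+1 == l) && (e.1 == s i)]].

Definition Tge (s : {perm 'I_n}) (l : nat) : {set 'I_n * R} := \bigcup_(l <= k < n.+1) tent s k.

Fixpoint Acc (s : {perm 'I_n}) (k : nat) : {set 'I_n * R} :=
  match k with
  | 0 => set0
  | k'.+1 =>
      Acc s k' :|:
        (if (uphalf n <= k'.+1) && is_matching E (Acc s k' :|: tent s k'.+1)
         then tent s k'.+1 else set0)
  end.

Definition acc_in (s : {perm 'I_n}) (k : nat) : {set 'I_n * R} :=
  match k with
  | 0 => set0
  | k'.+1 =>
      if (uphalf n <= k'.+1) && is_matching E (Acc s k' :|: tent s k'.+1)
      then tent s k'.+1 else set0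
  end.

Definition ALGge (s : {perm 'I_n}) (l : nat) : {set 'I_n * R} := \bigcup_(l <= k < n.+1) acc_in s k.

End Algorithm2.

(* Condition on the atom of arrival orders with L^{<= l} = S and
   T^{>= l+1} = T0.  On it M^{(l)} = A(S) is fixed, the tentative edge of
   round l is the edge of A(S) at the vertex arriving in round l, and
   ALG^{>= l+1} is contained in T0, so by submodularity the marginal value is at
   least that of this edge with respect to T0.  Transposing the round-l vertex
   with any other vertex of S preserves the atom, hence that vertex is uniform
   on S; since the stars of A(S) at the l vertices of S cover A(S),
   subadditivity of marginal values bounds the average by
   (v(A(S)) - v(T0)) / l. *)

From HB Require Import structures.
From mathcomp Require Import all_boot all_order all_algebra all_fingroup.
From mathcomp Require Import lra.
Set Implicit Arguments. Unset Strict Implicit. Unset Printing Implicit Defensive.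
Import Order.TTheory GRing.Theory Num.Theory.

Section Submodular.
Variables (F : realFieldType) (X : finType) (E : {set X}) (v : {set X} -> F).
Hypothesis v_mono : forall S1 S2 : {set X},
  S1 \subset S2 -> S2 \subset E -> (v S1 <= v S2)%R.
Hypothesis v_submod : forall S1 S2 : {set X}, S1 \subset E -> S2 \subset E ->
  (v (S1 :|: S2) + v (S1 :&: S2) <= v S1 + v S2)%R.

Lemma vmarg_le_subset (Z Y W : {set X}) :
  Z \subset E -> Y \subset W -> W \subset E -> (vmarg v Z W <= vmarg v Z Y)%R.
Proof.
move=> ZE YW WE; have YE : Y \subset E by apply: subset_trans WE.
have ZYE : Z :|: Y \subset E by rewrite subUset ZE YE.
have := v_submod ZYE WE; rewrite -setUA (setUidPr YW).
have : (v Y <= v ((Z :|: Y) :&: W))%R.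
  apply: v_mono; last by apply: subset_trans (subsetIr _ _) WE.
  by rewrite subsetI subsetUr YW.
rewrite /vmarg; lra.
Qed.

Lemma vmarg_bigcup_le (I : finType) (P : pred I) (B : I -> {set X}) (T : {set X}) :
  T \subset E -> (forall i, B i \subset E) ->
  (vmarg v (\bigcup_(i | P i) B i) T <= \sum_(i | P i) vmarg v (B i) T)%R.
Proof.
move=> TE BE.
suff [] : \bigcup_(i | P i) B i \subset E /\
  (vmarg v (\bigcup_(i | P i) B i) T <= \sum_(i | P i) vmarg v (B i) T)%R by [].
elim/big_rec2: _.
  by rewrite sub0set /vmarg set0U subrr.
move=> i s Y _ [YE leYs]; split; first by rewrite subUset BE YE.
have YTE : Y :|: T \subset E by rewrite subUset YE TE.
have := vmarg_le_subset (BE i) (subsetUr Y T) YTE.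
move: leYs; rewrite /vmarg -setUA; lra.
Qed.

Lemma gain_le_sum_vmarg (I : finType) (P : pred I) (B : I -> {set X}) (M T : {set X}) :
  T \subset E -> (forall i, B i \subset E) -> M \subset \bigcup_(i | P i) B i ->
  (v M - v T <= \sum_(i | P i) vmarg v (B i) T)%R.
Proof.
move=> TE BE MB; apply: le_trans (vmarg_bigcup_le P TE BE); rewrite /vmarg lerD2r.
apply: v_mono; first exact: subset_trans MB (subsetUl _ _).
by rewrite subUset TE andbT; apply/bigcupsP.
Qed.

End Submodular.

Lemma imset_tperm_id (T : finType) (X : {set T}) (x u : T) :
  x \in X -> u \in X -> tperm x u @: X = X.
Proof.
move=> xX uX; apply/eqP; rewrite eqEcard card_imset ?leqnn ?andbT; last exact: perm_inj.
by apply/subsetP => _ /imsetP[y yX ->]; case: tpermP => // ->.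
Qed.

Lemma sum_swap_average (T : finType) (V : nmodType) (Om : {set {perm T}})
    (S : {set T}) (x : T) (h : T -> V) :
  (forall s, s \in Om -> s x \in S) ->
  (forall s u, s \in Om -> u \in S -> (s * tperm (s x) u)%g \in Om) ->
  ((\sum_(u in S) h u) *+ #|Om| = (\sum_(s in Om) h (s x)) *+ #|S|)%R.
Proof.
(* Reindexing the double sum over Om x S by the involution
   (s, u) |-> (s * tperm (s x) u, s x) turns h u into h (s x). *)
move=> OmS OmC.
pose f (p : {perm T} * T) := ((p.1 * tperm (p.1 x) p.2)%g, p.1 x).
have fK : involutive f.
  by case=> s u; rewrite /f /= permM tpermL tpermC -mulgA tperm2 mulg1.
have f_dom p : (p.1 \in Om) && (p.2 \in S) -> ((f p).1 \in Om) && ((f p).2 \in S).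
  by case/andP=> sOm uS; rewrite OmC ?OmS.
rewrite -!sumrMnl -(eq_bigr _ (fun _ _ => sumr_const _ _)).
rewrite -[in RHS](eq_bigr _ (fun _ _ => sumr_const _ _)) exchange_big !pair_big.
rewrite (reindex_inj (can_inj fK)); apply: eq_bigl => p.
by apply/idP/idP => [/f_dom|/f_dom]; rewrite ?fK.
Qed.

Section Algorithm2Facts.
Variables (n : nat) (R : finType) (E : {set 'I_n * R})
          (A : {set 'I_n} -> {set 'I_n * R}).

Lemma mem_Lle (s : {perm 'I_n}) (k : nat) (i : 'I_n) : (s i \in Lle s k) = (i < k).
Proof. by rewrite mem_imset ?inE //; exact: perm_inj. Qed.

Lemma card_Lle (s : {perm 'I_n}) (k : nat) : k <= n -> #|Lle s k| = k.
Proof.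
move=> kn; rewrite card_imset; last exact: perm_inj.
rewrite -sum1_card (eq_bigl (fun i : 'I_n => i < k)) => [|i]; last by rewrite inE.
by rewrite (big_ord_narrow kn) sum1_card card_ord.
Qed.

Lemma Lle_subset (s : {perm 'I_n}) (k m : nat) : k <= m -> Lle s k \subset Lle s m.
Proof.
move=> km; apply/subsetP => _ /imsetP[i ik ->]; rewrite mem_Lle.
by rewrite inE in ik; exact: leq_trans ik km.
Qed.

Lemma Lle_swap (s : {perm 'I_n}) (l k : nat) (x u : 'I_n) :
  x \in Lle s l -> u \in Lle s l -> l <= k -> Lle (s * tperm x u)%g k = Lle s k.
Proof.
move=> xl ul lk; have sub_k := subsetP (Lle_subset s lk).
rewrite -[RHS](imset_tperm_id (sub_k _ xl) (sub_k _ ul)) -imset_comp.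
by apply: eq_imset => i; rewrite /= permM.
Qed.

Lemma tent0 (s : {perm 'I_n}) : tent A s 0 = set0.
Proof. by apply/setP => e; rewrite !inE; apply/andP => -[_ /existsP[]]. Qed.

Lemma tent_sub_Mround (s : {perm 'I_n}) (k : nat) : tent A s k \subset Mround A s k.
Proof. by apply/subsetP => e; rewrite inE => /andP[]. Qed.

Lemma tent_ord (s : {perm 'I_n}) (i : 'I_n) :
  tent A s i.+1 = [set e in Mround A s i.+1 | e.1 == s i].
Proof.
apply/setP => e; rewrite !inE; congr (_ && _); apply/existsP/eqP => [[j]|->].
  by case/andP=> /eqP[/val_inj ->] /eqP.
by exists i; rewrite !eqxx.
Qed.

Lemma tent_swap (s : {perm 'I_n}) (l k : nat) (x u : 'I_n) :
  x \in Lle s l -> u \in Lle s l -> l < k -> tent A (s * tperm x u)%g k = tent A s k.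
Proof.
move=> xl ul lk; rewrite /tent /Mround (Lle_swap xl ul (ltnW lk)).
apply/setP => e; rewrite !inE; congr (_ && _); apply: eq_existsb => i.
case: eqP => [ik|] //=; rewrite permM tpermD //.
  by apply: contraTneq xl => ->; rewrite mem_Lle -ltnS ik -leqNgt.
by apply: contraTneq ul => ->; rewrite mem_Lle -ltnS ik -leqNgt.
Qed.

Lemma Tge_swap (s : {perm 'I_n}) (l : nat) (x u : 'I_n) :
  x \in Lle s l -> u \in Lle s l -> Tge A (s * tperm x u)%g l.+1 = Tge A s l.+1.
Proof. by move=> xl ul; apply: eq_big_nat => k /andP[lk _]; exact: tent_swap xl ul lk. Qed.

Lemma acc_in_sub_tent (s : {perm 'I_n}) (k : nat) : acc_in E A s k \subset tent A s k.
Proof. by case: k => [|k] /=; [exact: sub0set | case: ifP; rewrite ?sub0set]. Qed.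

Lemma ALGge_sub_Tge (s : {perm 'I_n}) (k : nat) : ALGge E A s k \subset Tge A s k.
Proof.
rewrite /ALGge /Tge; apply: (big_ind2 (fun X Y : {set _} => X \subset Y)) => [|X1 X2 Y1 Y2|j _]; last exact: acc_in_sub_tent.
  exact: sub0set.
exact: setUSS.
Qed.

Lemma Tge_subset (s : {perm 'I_n}) (k : nat) (U : {set 'I_n * R}) :
  (forall L', A L' \subset U) -> Tge A s k \subset U.
Proof.
move=> AU; rewrite /Tge; apply: (big_ind (fun X : {set _} => X \subset U)) => [|X1 X2|j _]; first exact: sub0set.
  by move=> *; rewrite subUset; apply/andP.
exact: subset_trans (tent_sub_Mround _ _) (AU _).
Qed.

End Algorithm2Facts.

Section RoundAverage.
Variables (F : realFieldType) (n : nat) (R : finType) (E : {set 'I_n * R})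
          (v : {set 'I_n * R} -> F) (A : {set 'I_n} -> {set 'I_n * R}).
Hypothesis v_mono : forall S1 S2 : {set 'I_n * R},
  S1 \subset S2 -> S2 \subset E -> (v S1 <= v S2)%R.
Hypothesis v_submod : forall S1 S2 : {set 'I_n * R}, S1 \subset E -> S2 \subset E ->
  (v (S1 :|: S2) + v (S1 :&: S2) <= v S1 + v S2)%R.
Hypothesis A_sub : forall L', A L' \subset E.
Hypothesis A_in : forall L' e, e \in A L' -> e.1 \in L'.

Variables (i : 'I_n) (S : {set 'I_n}) (T0 : {set 'I_n * R}).
Hypothesis T0_sub : T0 \subset E.

Let Omega := [set s : {perm 'I_n} | (Lle s i.+1 == S) && (Tge A s i.+2 == T0)].
Let star (u : 'I_n) := [set e in A S | e.1 == u].
Let g (u : 'I_n) := vmarg v (star u) T0.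

Lemma star_sub (u : 'I_n) : star u \subset E.
Proof. by apply: subset_trans (A_sub S); apply/subsetP => e; rewrite inE => /andP[]. Qed.

Lemma sum_marg_tent_ge :
  (\sum_(s in Omega) g (s i) <=
   \sum_(s in Omega) vmarg v (tent A s i.+1) (ALGge E A s i.+2))%R.
Proof.
apply: ler_sum => s; rewrite inE => /andP[/eqP SL /eqP TL].
have -> : tent A s i.+1 = star (s i) by rewrite tent_ord /Mround SL.
apply: (vmarg_le_subset v_mono v_submod) => //; first exact: star_sub.
by rewrite -TL; exact: ALGge_sub_Tge.
Qed.

Lemma gain_le_sum_star : (v (A S) - v T0 <= \sum_(u in S) g u)%R.
Proof.
apply: (gain_le_sum_vmarg v_mono v_submod) => //; first exact: star_sub.
apply/subsetP => e eM; apply/bigcupP; exists e.1; first exact: A_in.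
by rewrite inE eM eqxx.
Qed.

Lemma sum_star_average : Omega != set0 ->
  ((\sum_(u in S) g u) *+ #|Omega| = (\sum_(s in Omega) g (s i)) *+ i.+1)%R.
Proof.
case/set0Pn=> s0; rewrite inE => /andP[/eqP S0 _].
rewrite -(card_Lle s0 (ltn_ord i)) S0.
apply: sum_swap_average => [s|s u]; rewrite inE => /andP[/eqP SL /eqP TL].
  by rewrite -SL mem_Lle.
move=> uS; have iL : s i \in Lle s i.+1 by rewrite mem_Lle.
have uL : u \in Lle s i.+1 by rewrite SL.
by rewrite inE (Lle_swap iL uL) // (Tge_swap A iL uL) SL TL !eqxx.
Qed.

Lemma round_average_ge : Omega != set0 ->
  ((\sum_(s in Omega) vmarg v (tent A s i.+1) (ALGge E A s i.+2)) / #|Omega|%:R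
   >= i.+1%:R^-1 * (v (A S) - v T0))%R.
Proof.
move=> Om_ne; have N_gt0 : (0 < #|Omega|%:R :> F)%R.
  by rewrite ltr0n card_gt0.
rewrite ler_pdivlMr //; apply: le_trans sum_marg_tent_ge.
apply: (@le_trans _ _ (i.+1%:R^-1 * (\sum_(u in S) g u) * #|Omega|%:R)%R).
  apply: ler_wpM2r; first exact: ltW.
  by apply: ler_wpM2l; [rewrite invr_ge0 | exact: gain_le_sum_star].
rewrite -mulrA mulr_natr sum_star_average // mulrnAr -mulrnAl -mulr_natr.
by rewrite mulVf ?mul1r ?pnatr_eq0.
Qed.

End RoundAverage.

Theorem mainTheorem11 (F : realFieldType) (n : nat) (R : finType)
  (E : {set 'I_n * R}) (v : {set 'I_n * R} -> F)
  (A : {set 'I_n} -> {set 'I_n * R}) (alpha : F) :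
  (forall S : {set 'I_n * R}, S \subset E -> (0 <= v S)%R) ->
  (forall S1 S2 : {set 'I_n * R}, S1 \subset S2 -> S2 \subset E -> (v S1 <= v S2)%R) ->
  (forall S1 S2 : {set 'I_n * R}, S1 \subset E -> S2 \subset E ->
     (v (S1 :|: S2) + v (S1 :&: S2) <= v S1 + v S2)%R) ->
  (0 < alpha)%R -> (alpha <= 1)%R ->
  (forall L' : {set 'I_n}, is_matching_in E L' (A L') /\
     forall M : {set 'I_n * R}, is_matching_in E L' M -> (alpha * v M <= v (A L'))%R) ->
  forall (l : nat), (uphalf n <= l)%N -> (l <= n)%N ->
  forall (S : {set 'I_n}) (T0 : {set 'I_n * R}),
  let Omega := [set s : {perm 'I_n} |
                  (Lle s l == S) && (Tge A s l.+1 == T0)] in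
  Omega != set0 ->
  ((\sum_(s in Omega) vmarg v (tent A s l) (ALGge E A s l.+1))
     / (#|Omega|%:R)
   >= (l%:R)^-1 * (v (A S) - v T0))%R.
Proof.
move=> _ v_mono v_submod _ _ hA [|l] _ ln S T0 Omega Om_ne.
  rewrite invr0 mul0r divr_ge0 // sumr_ge0 // => s _.
  by rewrite tent0 /vmarg set0U subrr.
have A_sub L' : A L' \subset E by case: (hA L') => /andP[/andP[]].
have A_in L' e : e \in A L' -> e.1 \in L'.
  by case: (hA L') => /andP[_ /forallP/(_ e)/implyP].
have T0_sub : T0 \subset E.
  by case/set0Pn: Om_ne => s; rewrite inE => /andP[_ /eqP <-]; exact: Tge_subset.
exact: (round_average_ge (i := Ordinal ln) v_mono v_submod A_sub A_in T0_sub Om_ne).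
Qed.
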